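(* Let $R$ be a local ring with maximal ideal $\mathcal{M}$ such that $\mathcal{M}$ is finitely generated both as a left ideal and as a right ideal. If every left $R$-module generated by two elements is a direct sum of cyclic modules, then either $\mathcal{M}$ is a principal left ideal or $\mathcal{M}$ is a principal right ideal.
   Context: All rings have identity and modules are unital. A ring $R$ is local if it has a unique maximal left ideal $\mathcal{M}$ (which is then the Jacobson radical and a two-sided ideal). *)

From HB Require Import structures.
From mathcomp Require Import all_boot all_order all_algebra.
Set Implicit Arguments. Unset Strict Implicit. Unset Printing Implicit Defensive.
Import GRing.Theory.
Local Open Scope ring_scope.

Definition left_ideal (R : nzRingType) (I : R -> Prop) : Prop :=
  [/\ I 0, (forall x y, I x -> I y -> I (x + y)) & (forall r x, I x -> I (r * x))].

Definition maximal_left_ideal (R : nzRingType) (I : R -> Prop) : Prop :=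
  [/\ left_ideal I, ~ (forall x, I x) &
      forall J : R -> Prop, left_ideal J -> (forall x, I x -> J x) ->
        (forall x, J x -> I x) \/ (forall x, J x)].

Definition local_with_max (R : nzRingType) (M : R -> Prop) : Prop :=
  maximal_left_ideal M /\
  forall N : R -> Prop, maximal_left_ideal N -> forall x, N x <-> M x.

Definition fg_left_ideal (R : nzRingType) (M : R -> Prop) : Prop :=
  exists (n : nat) (g : 'I_n -> R),
    forall x, M x <-> exists c : 'I_n -> R, x = \sum_(i < n) c i * g i.

Definition fg_right_ideal (R : nzRingType) (M : R -> Prop) : Prop :=
  exists (n : nat) (g : 'I_n -> R),
    forall x, M x <-> exists c : 'I_n -> R, x = \sum_(i < n) g i * c i.

Definition principal_left_ideal (R : nzRingType) (M : R -> Prop) : Prop :=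
  exists g : R, forall x, M x <-> exists r : R, x = r * g.

Definition principal_right_ideal (R : nzRingType) (M : R -> Prop) : Prop :=
  exists g : R, forall x, M x <-> exists r : R, x = g * r.

Definition two_generated (R : nzRingType) (V : lmodType R) : Prop :=
  exists x y : V, forall v : V, exists a b : R, v = a *: x + b *: y.

Definition direct_sum_of_cyclics (R : nzRingType) (V : lmodType R) : Prop :=
  exists (n : nat) (g : 'I_n -> V),
    (forall v : V, exists c : 'I_n -> R, v = \sum_(i < n) c i *: g i) /\
    (forall c d : 'I_n -> R,
        \sum_(i < n) c i *: g i = \sum_(i < n) d i *: g i ->
        forall i, c i *: g i = d i *: g i).

From HB Require Import structures.
From mathcomp Require Import all_boot all_order all_algebra.
From mathcomp Require Import classical_sets.
From Stdlib Require Import ClassicalEpsilon FunctionalExtensionality PropExtensionality Classical.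
Set Implicit Arguments. Unset Strict Implicit. Unset Printing Implicit Defensive.
Import GRing.Theory.
Local Open Scope ring_scope.

(* For [x, y] in [M], the module [R^2 / R (x, y)] is generated by two elements, hence is a
   direct sum of cyclic modules [R g_j].  As [(1, 0)] is in their span and [x] is in [M], some
   generator [g_i = (a, b)] has a unit first coordinate [a].  Writing
   [(x, y) = s (a, b) + t (0, 1)] and expanding [(0, 1)] along the decomposition yields a
   relation whose [g_i]-component must vanish; in the local ring (where everything outside [M]
   is a unit) this forces [y] in [x R] or [x] in [y R].  Thus elements of [M] are totally
   ordered by left divisibility, and among finitely many right generators of [M] one divides
   all the others. *)

Definition left_dvd (R : nzRingType) (a b : R) := exists z, b = a * z.

Section LocalRing.
Variables (R : nzRingType) (M : R -> Prop).
Hypothesis HM : local_with_max M.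

Lemma local_left_ideal : left_ideal M. Proof. by case: HM => [[]]. Qed.
Lemma local0 : M 0. Proof. by case: local_left_ideal. Qed.
Lemma localD a b : M a -> M b -> M (a + b).
Proof. by case: local_left_ideal => _ + _; apply. Qed.
Lemma localMl r a : M a -> M (r * a).
Proof. by case: local_left_ideal => _ _; apply. Qed.

Lemma local_neq1 : ~ M 1.
Proof. by case: HM => [[_ + _] _] M1; apply=> z; rewrite -(mulr1 z); apply: localMl. Qed.

Lemma local_1B m : M m -> ~ M (1 - m).
Proof. by move=> Mm M1m; apply: local_neq1; rewrite -(subrK m 1); apply: localD. Qed.

Lemma local_sum n (F : 'I_n -> R) : (forall i, M (F i)) -> M (\sum_(i < n) F i).
Proof. by move=> MF; apply: (big_ind M local0 localD) => i _; apply: MF. Qed.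

(* Zorn's lemma on the sets closed under [+] and left multiplication that avoid [1] and
   contain [L] as soon as they are nonempty: requiring [L] only of nonempty sets lets the
   empty chain have an upper bound. *)
Lemma proper_left_ideal_sub_local (L : R -> Prop) :
  left_ideal L -> ~ L 1 -> forall z, L z -> M z.
Proof.
move=> [L0 LD LM] L1.
pose P (X : set R) := [/\ forall a b, X a -> X b -> X (a + b),
  forall r a, X a -> X (r * a), ~ X 1 & forall a, X a -> (L `<=` X)%classic].
have [A [[AD AM A1 AL] Amax]] : exists A, P A /\ forall B, (A `<` B)%classic -> ~ P B.
  apply: Zorn_bigcup => F FP Ftot; split.
  - move=> a b [X FX Xa] [Y FY Yb].
    have [XY|YX] := Ftot X Y FX FY.
    + by exists Y => //; have [+ _ _ _] := FP Y FY; apply => //; apply: XY.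
    + by exists X => //; have [+ _ _ _] := FP X FX; apply => //; apply: YX.
  - by move=> r a [X FX Xa]; exists X => //; have [_ + _ _] := FP X FX; apply.
  - by move=> [X FX X1]; have [_ _ + _] := FP X FX.
  - move=> a [X FX Xa] t Lt; exists X => //.
    by have [_ _ _ +] := FP X FX; move/(_ a Xa); apply.
have [a Aa] : exists a, A a.
  apply: NNPP => A0; apply: (Amax L); last by split=> // ? _ ?.
  by split=> [t At|LA]; [exfalso; apply: A0; exists t | apply: A0; exists 0; apply: LA].
have LA := AL a Aa.
have Amaxl : maximal_left_ideal A.
  split=> [|A_all|J [J0 JD JM] AJ]; first by split=> //; rewrite -(mul0r a); apply: AM.
    exact: A1 (A_all 1).
  have [J1|J1] := classic (J 1); first by right=> t; rewrite -(mulr1 t); apply: JM.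
  left=> t Jt; apply: NNPP => At; apply: (Amax J).
    by split=> // JA; apply: At; apply: JA.
  by split=> // b _ s Ls; apply/AJ/LA.
by case: HM => _ uniqM z Lz; apply/(uniqM A Amaxl)/LA.
Qed.

Lemma local_1B_left_inv m : M m -> exists v, v * (1 - m) = 1.
Proof.
move=> Mm; pose L z := exists r, z = r * (1 - m).
have L_ideal : left_ideal L.
  split=> [|a b [r ->] [s ->]|r a [s ->]]; first by exists 0; rewrite mul0r.
    by exists (r + s); rewrite mulrDl.
  by exists (r * s); rewrite mulrA.
apply: NNPP => L1; apply: (local_1B Mm).
apply: (proper_left_ideal_sub_local L_ideal) => [[v ?]|]; first by apply: L1; exists v.
by exists 1; rewrite mul1r.
Qed.

Lemma local_left_inv z : ~ M z -> exists u, u * z = 1.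
Proof.
move=> Mz; pose J w := exists r m, M m /\ w = r * z + m.
have J_ideal : left_ideal J.
  split=> [|a b [r [m [Mm ->]]] [s [n [Mn ->]]]|t a [r [m [Mm ->]]]].
  - by exists 0, 0; rewrite mul0r addr0; split=> //; apply: local0.
  - by exists (r + s), (m + n); rewrite mulrDl addrACA; split=> //; apply: localD.
  - by exists (t * r), (t * m); rewrite mulrDr mulrA; split=> //; apply: localMl.
case: HM => [[_ _ /(_ J J_ideal)]] [].
- by move=> m Mm; exists 0, m; rewrite mul0r add0r.
- by move=> JM; case: Mz; apply: JM; exists 1, 0; rewrite mul1r addr0; split=> //; apply: local0.
- move=> /(_ 1) [r [m [Mm e1]]]; have [v v1m] := local_1B_left_inv Mm.
  by exists (v * r); rewrite -mulrA -v1m e1 addrK.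
Qed.

Lemma local_unit z : ~ M z -> exists u, u * z = 1 /\ z * u = 1.
Proof.
move=> Mz; have [u uz] := local_left_inv Mz; exists u; split=> //.
have [Mu|Mu] := classic (M u).
  have [w w1zu] := local_1B_left_inv (localMl z Mu).
  case: Mz; rewrite -[z]mul1r -w1zu -mulrA mulrBl mul1r -mulrA uz mulr1 subrr mulr0.
  exact: local0.
have [v vu] := local_left_inv Mu.
by rewrite -[z]mul1r -{1}vu -(mulrA v) uz mulr1.
Qed.

Lemma localMr m r : M m -> M (m * r).
Proof.
move=> Mm; apply: NNPP => Mmr; have [u [_ mru]] := local_unit Mmr.
have [Mru|Mru] := classic (M (r * u)).
  by apply: local_neq1; rewrite -mru -mulrA; apply: localMl.
have [w [_ ruw]] := local_unit Mru.
have mw : m = w by rewrite -[m]mulr1 -ruw !mulrA mru mul1r.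
by apply: local_neq1; rewrite -ruw -mw; apply: localMl.
Qed.

(* Coordinatewise: [(x, y) = s (a, b) + t (0, 1)] with [a] a unit, and
   [(s + t d) (a, b) = r (x, y)]. *)
Lemma left_dvd_total_of_relation x y a b d s t r :
  ~ M a -> x = s * a -> y = s * b + t ->
  (s + t * d) * a = r * x -> (s + t * d) * b = r * y ->
  left_dvd x y \/ left_dvd y x.
Proof.
move=> Ma ex ey hra hrb; have [u [_ au]] := local_unit Ma.
have es : s = x * u by rewrite ex -mulrA au mulr1.
have ga_rs : s + t * d = r * s.
  by rewrite -[LHS]mulr1 -au mulrA hra ex !mulrA -(mulrA _ a) au mulr1.
have rt0 : r * t = 0.
  by apply: (addrI (r * s * b)); rewrite addr0 -mulrA -mulrDr -ey -hrb ga_rs mulrA.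
have [Mr|Mr] := classic (M r); last first.
  have [v [vr _]] := local_unit Mr.
  have t0 : t = 0 by rewrite -[t]mul1r -vr -mulrA rt0 mulr0.
  by left; exists (u * b); rewrite ey t0 addr0 es mulrA.
have [w [w1r _]] := local_unit (local_1B Mr).
have ga0 : (1 - r) * (s + t * d) = 0.
  by rewrite mulrBl mul1r mulrDr mulrA rt0 mul0r addr0 -ga_rs subrr.
have s_td : s = - (t * d).
  by apply/eqP; rewrite -addr_eq0 -[_ + _]mul1r -w1r -mulrA ga0 mulr0.
have [Mdb|Mdb] := classic (M (1 - d * b)).
  have [v [_ dbv]] : exists v, v * (d * b) = 1 /\ d * b * v = 1.
    by apply: local_unit; move: (local_1B Mdb); rewrite opprB addrC subrK.
  have ht : t = - (s * b * v) by rewrite -[t]mulr1 -dbv s_td !mulNr opprK !mulrA.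
  by left; exists (u * b * (1 - v)); rewrite ey ht es !mulrA mulrBr mulr1.
have [v [_ dbv]] := local_unit Mdb.
have yt : y = t * (1 - d * b) by rewrite ey s_td mulrBr mulr1 mulNr mulrA addrC.
have ht : t = y * v by rewrite -[t]mulr1 -dbv mulrA -yt.
by right; exists (- (v * d * a)); rewrite ex s_td ht mulrN !mulrA mulNr.
Qed.

End LocalRing.

Section CyclicQuotient.
Variables (R : nzRingType) (V : lmodType R) (v0 : V).

Definition in_cyclic (v : V) := exists r, v = r *: v0.

Lemma in_cyclic0 : in_cyclic 0.
Proof. by exists 0; rewrite scale0r. Qed.

Lemma in_cyclicD v w : in_cyclic v -> in_cyclic w -> in_cyclic (v + w).
Proof. by move=> [r ->] [s ->]; exists (r + s); rewrite scalerDl. Qed.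

Lemma in_cyclicZ a v : in_cyclic v -> in_cyclic (a *: v).
Proof. by move=> [r ->]; exists (a * r); rewrite scalerA. Qed.

Lemma in_cyclicN v : in_cyclic v -> in_cyclic (- v).
Proof. by move=> /(in_cyclicZ (-1)); rewrite scaleN1r. Qed.

Lemma in_cyclic_sym v w : in_cyclic (v - w) -> in_cyclic (w - v).
Proof. by move=> vw; rewrite -opprB; apply: in_cyclicN. Qed.

Lemma in_cyclic_trans u v w : in_cyclic (u - v) -> in_cyclic (v - w) -> in_cyclic (u - w).
Proof. by move=> uv vw; rewrite -(subrKA v); apply: in_cyclicD. Qed.

(* The quotient [V / R v0] is carried by a canonical representative of each coset,
   chosen by Hilbert's epsilon. *)
Definition cq_repr (v : V) : V := epsilon (inhabits 0) (fun w => in_cyclic (v - w)).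

Lemma cq_repr_cong v : in_cyclic (v - cq_repr v).
Proof.
apply: (epsilon_spec (inhabits 0) (fun w => in_cyclic (v - w))).
by exists v; rewrite subrr; apply: in_cyclic0.
Qed.

Lemma cq_repr_eq v w : in_cyclic (v - w) -> cq_repr v = cq_repr w.
Proof.
move=> vw; rewrite /cq_repr; congr epsilon.
apply: functional_extensionality => z; apply: propositional_extensionality.
by split=> h; [apply: in_cyclic_trans (in_cyclic_sym vw) h | apply: in_cyclic_trans vw h].
Qed.

Lemma cq_repr_idem v : cq_repr (cq_repr v) == cq_repr v.
Proof. by apply/eqP/cq_repr_eq/in_cyclic_sym/cq_repr_cong. Qed.

Record cquot := CQuot { cq_val : V; _ : cq_repr cq_val == cq_val }.
HB.instance Definition _ := [isSub for cq_val].
HB.instance Definition _ := [Choice of cquot by <:].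

Definition cq (v : V) : cquot := CQuot (cq_repr_idem v).

Lemma cq_eqP v w : cq v = cq w <-> in_cyclic (v - w).
Proof.
split=> [/(congr1 cq_val) /= vw|/cq_repr_eq vw]; last exact: val_inj.
apply: in_cyclic_trans (cq_repr_cong v) _; rewrite vw.
exact/in_cyclic_sym/cq_repr_cong.
Qed.

Lemma cq_valK : cancel cq_val cq.
Proof. by case=> v vP; apply: val_inj; apply/eqP. Qed.

Lemma cq_ind (P : cquot -> Prop) : (forall v, P (cq v)) -> forall p, P p.
Proof. by move=> Pcq p; rewrite -[p]cq_valK. Qed.

Lemma cq_valE v : in_cyclic (cq_val (cq v) - v).
Proof. exact/in_cyclic_sym/cq_repr_cong. Qed.

Definition cq_add (p q : cquot) := cq (cq_val p + cq_val q).
Definition cq_opp (p : cquot) := cq (- cq_val p).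
Definition cq_scale (a : R) (p : cquot) := cq (a *: cq_val p).

Lemma cq_addE v w : cq_add (cq v) (cq w) = cq (v + w).
Proof. by apply/cq_eqP; rewrite opprD addrACA; apply: in_cyclicD; apply: cq_valE. Qed.

Lemma cq_oppE v : cq_opp (cq v) = cq (- v).
Proof. by apply/cq_eqP; rewrite -opprD; apply/in_cyclicN/cq_valE. Qed.

Lemma cq_scaleE a v : cq_scale a (cq v) = cq (a *: v).
Proof. by apply/cq_eqP; rewrite -scalerBr; apply/in_cyclicZ/cq_valE. Qed.

Lemma cq_addA : associative cq_add.
Proof. by elim/cq_ind=> u; elim/cq_ind=> v; elim/cq_ind=> w; rewrite !cq_addE addrA. Qed.

Lemma cq_addC : commutative cq_add.
Proof. by elim/cq_ind=> u; elim/cq_ind=> v; rewrite !cq_addE addrC. Qed.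

Lemma cq_add0 : left_id (cq 0) cq_add.
Proof. by elim/cq_ind=> v; rewrite cq_addE add0r. Qed.

Lemma cq_addN : left_inverse (cq 0) cq_opp cq_add.
Proof. by elim/cq_ind=> v; rewrite cq_oppE cq_addE addNr. Qed.

HB.instance Definition _ := GRing.isZmodule.Build cquot cq_addA cq_addC cq_add0 cq_addN.

Lemma cqD v w : cq v + cq w = cq (v + w).
Proof. exact: cq_addE. Qed.

Lemma cq_scaleA a b p : cq_scale a (cq_scale b p) = cq_scale (a * b) p.
Proof. by elim/cq_ind: p => v; rewrite !cq_scaleE scalerA. Qed.

Lemma cq_scale1 : left_id 1 cq_scale.
Proof. by elim/cq_ind=> v; rewrite cq_scaleE scale1r. Qed.

Lemma cq_scaleDr : right_distributive cq_scale +%R.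
Proof.
move=> a; elim/cq_ind=> v; elim/cq_ind=> w.
by rewrite cqD !cq_scaleE cqD scalerDr.
Qed.

Lemma cq_scaleDl p : {morph cq_scale^~ p : a b / a + b}.
Proof. by elim/cq_ind: p => v a b; rewrite !cq_scaleE cqD scalerDl. Qed.

HB.instance Definition _ :=
  GRing.Zmodule_isLmodule.Build R cquot cq_scaleA cq_scale1 cq_scaleDr cq_scaleDl.

Lemma cq_is_linear : linear cq.
Proof. by move=> a v w; rewrite -cqD -cq_scaleE. Qed.

HB.instance Definition _ := GRing.isLinear.Build R V cquot *:%R cq cq_is_linear.

Lemma cq_eq0 v : cq v = 0 <-> in_cyclic v.
Proof. by rewrite -(raddf0 cq) cq_eqP subr0. Qed.

End CyclicQuotient.

Section RelationModule.
Variable R : nzRingType.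

Lemma cquot_pair_two_generated (v0 : R^o * R^o) : two_generated (cquot v0).
Proof.
exists (cq v0 (1, 0)), (cq v0 (0, 1)); elim/cq_ind=> v; exists v.1, v.2.
rewrite -!linearZ -linearD; congr cq; case: v => a b.
by change ((a, b) = (a * 1 + b * 0, a * 0 + b * 1)); rewrite !mulr1 !mulr0 addr0 add0r.
Qed.

Lemma fstD (u v : R^o * R^o) : (u + v).1 = u.1 + v.1. Proof. by []. Qed.
Lemma fstZ a (u : R^o * R^o) : (a *: u).1 = a * u.1. Proof. by []. Qed.

Lemma fst_sum n (F : 'I_n -> R^o * R^o) : (\sum_(i < n) F i).1 = \sum_(i < n) (F i).1.
Proof. exact: (big_morph fst fstD erefl). Qed.

Lemma spanning_first_coord_notin (M : R -> Prop) (v0 : R^o * R^o) n (g : 'I_n -> cquot v0) :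
  local_with_max M -> M v0.1 ->
  (forall w, exists c : 'I_n -> R, w = \sum_(i < n) c i *: g i) ->
  exists i, ~ M (cq_val (g i)).1.
Proof.
move=> HM Mv0 span; have [c e1] := span (cq v0 (1, 0)).
have [r] : in_cyclic v0 ((1, 0) - \sum_(i < n) c i *: cq_val (g i)).
  apply/cq_eqP; rewrite linear_sum e1; apply: eq_bigr => i _.
  by rewrite linearZ; congr (_ *: _); apply/esym/cq_valK.
move/eqP; rewrite subr_eq => /eqP /(congr1 fst) /=; rewrite fst_sum => e.
apply: NNPP => allM; apply: (local_neq1 HM); rewrite e.
apply: (localD HM); first exact: localMl.
apply: (local_sum HM) => i; rewrite fstZ; apply: (localMl HM).
by apply: NNPP => Mgi; apply: allM; exists i.
Qed.

Lemma left_dvd_total_of_cyclic_decomposition (M : R -> Prop) (x y : R) :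
  local_with_max M -> M x -> direct_sum_of_cyclics (cquot ((x, y) : R^o * R^o)) ->
  left_dvd x y \/ left_dvd y x.
Proof.
move=> HM Mx [n [g [span indep]]].
have [i Ma] := spanning_first_coord_notin HM (Mx : M ((x, y) : R^o * R^o).1) span.
have [u [ua _]] := local_unit HM Ma; set p := cq_val (g i) in ua *.
have [d e2] := span (cq _ (0, 1)).
pose s := x * u; pose t := y - s * p.2.
have xs : x = s * p.1 by rewrite /s -mulrA ua mulr1.
have yst : y = s * p.2 + t by rewrite /t addrC subrK.
pose c j := (if j == i then s else 0) + t * d j.
have sum0 : \sum_(j < n) c j *: g j = 0.
  rewrite (eq_bigr _ (fun j _ => scalerDl _ _ _)) big_split /=.
  rewrite -(eq_bigr _ (fun j _ => scalerA _ _ _)) -scaler_sumr -e2.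
  rewrite (bigD1 i) //= eqxx big1 => [|j /negbTE ->]; last exact: scale0r.
  rewrite addr0 -[g i]cq_valK -!linearZ -linearD; apply/cq_eq0; exists 1.
  rewrite scale1r; change ((s * p.1 + t * 0, s * p.2 + t * 1) = (x, y)).
  by rewrite mulr0 addr0 mulr1 -xs -yst.
have : c i *: g i = 0.
  have := indep c (fun=> 0).
  by rewrite sum0 big1 => [/(_ erefl i)|j _]; rewrite ?scale0r.
rewrite -[g i]cq_valK -linearZ /c eqxx => /cq_eq0 [r hr].
apply: (left_dvd_total_of_relation HM (d := d i) Ma xs yst).
  exact: (congr1 fst hr).
exact: (congr1 snd hr).
Qed.

End RelationModule.

Lemma common_left_divisor (R : nzRingType) (P : R -> Prop) n (g : 'I_n -> R) :
  P 0 -> (forall i, P (g i)) ->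
  (forall a b, P a -> P b -> left_dvd a b \/ left_dvd b a) ->
  exists g0, P g0 /\ forall i, left_dvd g0 (g i).
Proof.
move=> P0 + total; elim: n g => [|n IH] g Pg; first by exists 0; split=> // -[].
have [g0 [Pg0 g0g]] := IH (g \o lift ord_max) (fun i => Pg _).
have [[z gz]|[z gz]] := total _ _ Pg0 (Pg ord_max).
  exists g0; split=> // i; have [j ->|->] := unliftP ord_max i; first exact: g0g.
  by exists z.
exists (g ord_max); split=> // i; have [j ->|->] := unliftP ord_max i.
  by have [w /= ->] := g0g j; exists (z * w); rewrite gz mulrA.
by exists 1; rewrite mulr1.
Qed.

Theorem theorem2p4 (R : nzRingType) (M : R -> Prop) :
  local_with_max M ->
  fg_left_ideal M ->
  fg_right_ideal M ->
  (forall V : lmodType R, two_generated V -> direct_sum_of_cyclics V) ->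
  principal_left_ideal M \/ principal_right_ideal M.
Proof.
move=> HM _ [n [g Mg]] decomp; right.
have Mgi i : M (g i).
  apply/Mg; exists (fun j => (j == i)%:R).
  by rewrite (bigD1 i) //= eqxx mulr1 big1 ?addr0 // => j /negbTE ->; rewrite mulr0.
have total a b : M a -> M b -> left_dvd a b \/ left_dvd b a.
  move=> Ma _; apply: (left_dvd_total_of_cyclic_decomposition HM Ma).
  exact/decomp/cquot_pair_two_generated.
have [g0 [Mg0 g0g]] := common_left_divisor (local0 HM) Mgi total.
exists g0 => z; split=> [/Mg [c ->]|[r ->]]; last exact: localMr.
apply: (big_ind (left_dvd g0)) => [|_ _ [u ->] [v ->]|i _].
- by exists 0; rewrite mulr0.
- by exists (u + v); rewrite mulrDr.
- by have [w ->] := g0g i; exists (w * c i); rewrite mulrA.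
Qed.
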